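(* Let $\lambda$ be a nonzero complex constant and let $\psi(q,\bar q,z,\bar z)$ satisfy $$\psi_{q\bar q}\psi_{z\bar z}-\psi_{q\bar z}\psi_{\bar q z}=e^{\psi_q+\psi_{\bar q}}\bigl(\psi_{q\bar q}^2-\psi_{qq}\psi_{\bar q\bar q}\bigr)$$ together with the two constraints $$e^{\psi_{\bar q}}(\psi_{\bar q\bar q}+\psi_{q\bar q})=\lambda\,\psi_{q\bar z},\qquad \lambda\,e^{\psi_q}(\psi_{qq}+\psi_{q\bar q})=\psi_{\bar q z},$$ and assume $\psi_{q\bar q}\neq0$. Then $\psi_{z\bar z}=e^{\psi_q+\psi_{\bar q}}(\psi_{qq}+2\psi_{q\bar q}+\psi_{\bar q\bar q})$; equivalently, writing $q=x+iy$ with $x,y$ real, $\psi_{z\bar z}=e^{\psi_x}\psi_{xx}$ (the Boyer–Finley equation, in which $y$ enters only as a parameter).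
   Context: Subscripts denote partial (Wirtinger) derivatives with respect to $q,\bar q,z,\bar z$, and $\psi_x,\psi_{xx}$ partial derivatives with respect to the real variable $x=(q+\bar q)/2$. The two constraints arise from the partner-symmetry equations of the hyperbolic complex Monge–Ampère equation when the symmetry is the rotational one, $\varphi=i(z_1u_1-\bar z_1u_{\bar1})$, whose Legendre transform is $\Phi=i(q-\bar q)$. *)

(* complex numbers are modelled as pairs of Stdlib reals,
   and functions of (q, z) in C^2 as functions of the four real
   coordinates q = x + i y, z = u + i v. *)
From Stdlib Require Import Reals.
Open Scope R_scope.

Definition Cx : Type := (R * R)%type.
Definition C0 : Cx := (0, 0).
Definition CI : Cx := (0, 1).
Definition Cadd (a b : Cx) : Cx := (fst a + fst b, snd a + snd b).
Definition Copp (a : Cx) : Cx := (- fst a, - snd a).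
Definition Csub (a b : Cx) : Cx := Cadd a (Copp b).
Definition Cmul (a b : Cx) : Cx :=
  (fst a * fst b - snd a * snd b, fst a * snd b + snd a * fst b).
Definition Cscal (r : R) (a : Cx) : Cx := (r * fst a, r * snd a).
Definition Cexp (a : Cx) : Cx := (exp (fst a) * cos (snd a), exp (fst a) * sin (snd a)).

Definition Fun4 : Type := R -> R -> R -> R -> Cx.
Definition Dom4 : Type := R -> R -> R -> R -> Prop.

Definition cderiv_at (h : R -> Cx) (t : R) (l : Cx) : Prop :=
  derivable_pt_lim (fun s => fst (h s)) t (fst l) /\
  derivable_pt_lim (fun s => snd (h s)) t (snd l).

Definition Dx (U : Dom4) (f g : Fun4) : Prop :=
  forall x y u v, U x y u v -> cderiv_at (fun t => f t y u v) x (g x y u v).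
Definition Dy (U : Dom4) (f g : Fun4) : Prop :=
  forall x y u v, U x y u v -> cderiv_at (fun t => f x t u v) y (g x y u v).
Definition Du (U : Dom4) (f g : Fun4) : Prop :=
  forall x y u v, U x y u v -> cderiv_at (fun t => f x y t v) u (g x y u v).
Definition Dv (U : Dom4) (f g : Fun4) : Prop :=
  forall x y u v, U x y u v -> cderiv_at (fun t => f x y u t) v (g x y u v).

Definition Dq (U : Dom4) (f g : Fun4) : Prop :=
  exists fx fy, Dx U f fx /\ Dy U f fy /\
    forall x y u v, U x y u v ->
      g x y u v = Cscal (1/2) (Csub (fx x y u v) (Cmul CI (fy x y u v))).
Definition Dqb (U : Dom4) (f g : Fun4) : Prop :=
  exists fx fy, Dx U f fx /\ Dy U f fy /\
    forall x y u v, U x y u v ->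
      g x y u v = Cscal (1/2) (Cadd (fx x y u v) (Cmul CI (fy x y u v))).
Definition Dz (U : Dom4) (f g : Fun4) : Prop :=
  exists fu fv, Du U f fu /\ Dv U f fv /\
    forall x y u v, U x y u v ->
      g x y u v = Cscal (1/2) (Csub (fu x y u v) (Cmul CI (fv x y u v))).
Definition Dzb (U : Dom4) (f g : Fun4) : Prop :=
  exists fu fv, Du U f fu /\ Dv U f fv /\
    forall x y u v, U x y u v ->
      g x y u v = Cscal (1/2) (Cadd (fu x y u v) (Cmul CI (fv x y u v))).

(* Although the hypotheses describe psi and its Wirtinger derivatives, the
   conclusion is a pointwise algebraic consequence of the three equations.  Writing, at a fixed point,
     a = psi_qq, b = psi_qqb, c = psi_qbqb, P = psi_qzb, Q = psi_qbz,
     Z = psi_zzb, E1 = e^psi_q, E2 = e^psi_qb,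
   the constraints give  lam P = E2 (b + c)  and  Q = lam E1 (a + b),  hence
     P Q = E1 E2 (a + b)(b + c) = E1 E2 (b^2 + ab + bc + ac),
   and the Monge–Ampère equation  b Z - P Q = E1 E2 (b^2 - ac)  becomes
     b Z = b E1 E2 (a + 2b + c).
   Cancelling the nonzero factor b yields the claim, since
   e^(psi_q + psi_qb) = E1 E2. *)
From Stdlib Require Import Reals Lra Psatz Ring.
Open Scope R_scope.

Definition C1 : Cx := (1, 0).

Lemma Cx_ring : ring_theory C0 C1 Cadd Cmul Csub Copp (@eq Cx).
Proof.
  constructor; intros;
    repeat match goal with a : Cx |- _ => destruct a end;
    unfold C0, C1, Cadd, Cmul, Csub, Copp; simpl;
    apply injective_projections; simpl; ring.
Qed.

Add Ring CxRing : Cx_ring.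

Lemma Cexp_add (a b : Cx) : Cexp (Cadd a b) = Cmul (Cexp a) (Cexp b).
Proof.
  destruct a, b; unfold Cexp, Cadd, Cmul; simpl.
  rewrite exp_plus, cos_plus, sin_plus; f_equal; ring.
Qed.

Lemma Cscal2 (a : Cx) : Cscal 2 a = Cadd a a.
Proof. destruct a; unfold Cscal, Cadd; simpl; f_equal; ring. Qed.

Definition Cinv (a : Cx) : Cx :=
  let n := fst a * fst a + snd a * snd a in (fst a / n, - snd a / n).

Lemma Cinv_l (a : Cx) : a <> C0 -> Cmul (Cinv a) a = C1.
Proof.
  destruct a as [p q]; intros Ha.
  assert (Hn : p * p + q * q <> 0).
  { intros Hz; apply Ha; unfold C0; f_equal; nra. }
  unfold Cinv, Cmul, C1; simpl; f_equal; field; exact Hn.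
Qed.

Lemma Cmul_reg_l (b d e : Cx) : b <> C0 -> Cmul b d = Cmul b e -> d = e.
Proof.
  intros Hb Hbde.
  transitivity (Cmul (Cmul (Cinv b) b) d); [rewrite Cinv_l by exact Hb; ring |].
  transitivity (Cmul (Cmul (Cinv b) b) e); [| rewrite Cinv_l by exact Hb; ring].
  replace (Cmul (Cmul (Cinv b) b) d) with (Cmul (Cinv b) (Cmul b d)) by ring.
  rewrite Hbde; ring.
Qed.

Lemma boyer_finley_pointwise (lam a b c P Q Z E1 E2 : Cx) :
  b <> C0 ->
  Csub (Cmul b Z) (Cmul P Q) = Cmul (Cmul E1 E2) (Csub (Cmul b b) (Cmul a c)) ->
  Cmul E2 (Cadd c b) = Cmul lam P ->
  Cmul (Cmul lam E1) (Cadd a b) = Q ->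
  Z = Cmul (Cmul E1 E2) (Cadd (Cadd a (Cadd b b)) c).
Proof.
  intros Hb Hma Hp Hq.
  apply (Cmul_reg_l b); [exact Hb |].
  assert (HbZ : Cmul b Z
                = Cadd (Cmul (Cmul E1 E2) (Csub (Cmul b b) (Cmul a c))) (Cmul P Q))
    by (rewrite <- Hma; ring).
  assert (HPQ : Cmul P Q = Cmul (Cmul E1 (Cadd a b)) (Cmul E2 (Cadd c b))).
  { rewrite <- Hq, Hp; ring. }
  rewrite HbZ, HPQ; ring.
Qed.

Theorem mainTheorem6
  (U : Dom4) (lam : Cx)
  (psi psi_q psi_qb psi_z
   psi_qq psi_qqb psi_qbqb psi_qzb psi_qbz psi_zzb : Fun4) :
  lam <> C0 ->
  Dq U psi psi_q -> Dqb U psi psi_qb -> Dz U psi psi_z ->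
  Dq U psi_q psi_qq -> Dqb U psi_q psi_qqb -> Dqb U psi_qb psi_qbqb ->
  Dzb U psi_q psi_qzb -> Dz U psi_qb psi_qbz -> Dzb U psi_z psi_zzb ->
  (forall x y u v, U x y u v ->
     Csub (Cmul (psi_qqb x y u v) (psi_zzb x y u v))
          (Cmul (psi_qzb x y u v) (psi_qbz x y u v))
     = Cmul (Cexp (Cadd (psi_q x y u v) (psi_qb x y u v)))
            (Csub (Cmul (psi_qqb x y u v) (psi_qqb x y u v))
                  (Cmul (psi_qq x y u v) (psi_qbqb x y u v)))) ->
  (forall x y u v, U x y u v ->
     Cmul (Cexp (psi_qb x y u v)) (Cadd (psi_qbqb x y u v) (psi_qqb x y u v))
     = Cmul lam (psi_qzb x y u v)) ->
  (forall x y u v, U x y u v ->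
     Cmul (Cmul lam (Cexp (psi_q x y u v))) (Cadd (psi_qq x y u v) (psi_qqb x y u v))
     = psi_qbz x y u v) ->
  (forall x y u v, U x y u v -> psi_qqb x y u v <> C0) ->
  forall x y u v, U x y u v ->
    psi_zzb x y u v
    = Cmul (Cexp (Cadd (psi_q x y u v) (psi_qb x y u v)))
           (Cadd (Cadd (psi_qq x y u v) (Cscal 2 (psi_qqb x y u v))) (psi_qbqb x y u v)).
Proof.
  intros _ _ _ _ _ _ _ _ _ _ Hma Hp Hq Hb x y u v Hxyuv.
  rewrite Cexp_add, Cscal2.
  apply (boyer_finley_pointwise lam _ _ _ (psi_qzb x y u v) (psi_qbz x y u v));
    [auto | rewrite <- Cexp_add | |]; auto.
Qed.
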